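(* If $J,K$ are two independent randomly-stopped bit sequences, then their concatenation $J\Vert K$ is a randomly-stopped bit sequence.
   Context: $\{0,1\}^*:=\bigcup_{n\ge0}\{0,1\}^n$; for $K\in\{0,1\}^*$, $|K|$ is its length, $K_i$ its $i$-th entry, and $K^{j}=(K_1,\dots,K_j)$; $J\Vert K$ denotes concatenation of sequences. A random $K\in\{0,1\}^*$ is a randomly-stopped bit sequence if $\mathbb{P}(K_n=k_n\mid |K|\ge n,\,K^{n-1}=k^{n-1})=1/2$ for all $n\ge1$ and all $k^n\in\{0,1\}^n$ with $\mathbb{P}(|K|\ge n,\,K^{n-1}=k^{n-1})>0$. *)

From HB Require Import structures.
From mathcomp Require Import all_boot all_order all_algebra.
From mathcomp Require Import all_classical all_reals.
From mathcomp Require Import ereal measure probability.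
Set Implicit Arguments. Unset Strict Implicit. Unset Printing Implicit Defensive.
Import Order.TTheory GRing.Theory Num.Theory.
Local Open Scope classical_set_scope.
Local Open Scope ring_scope.

(* Elements of {0,1}^* are bit sequences [seq bool]; the i-th entry K_i
   (1-indexed) is [nth false K i.-1], and K^j is [take j K]. *)

(* A random element of {0,1}^* on (T, P): every fibre {K = s} is an event
   (equivalent to measurability for the discrete sigma-algebra on the
   countable set of bit sequences). *)
Definition discrete_rv d (T : measurableType d) (K : T -> seq bool) : Prop :=
  forall s : seq bool, measurable (K @^-1` [set s]).

Definition independent_rv d (T : measurableType d) (R : realType)
  (P : probability T R) (J K : T -> seq bool) : Prop :=
  forall s t : seq bool,
    P (J @^-1` [set s] `&` K @^-1` [set t]) =
    (P (J @^-1` [set s]) * P (K @^-1` [set t]))%E.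

(* Randomly-stopped bit sequence: for all n >= 1 and k^n in {0,1}^n with
   P(|K| >= n, K^{n-1} = k^{n-1}) > 0,
   P(K_n = k_n | |K| >= n, K^{n-1} = k^{n-1}) = 1/2,
   the conditional probability written out as P(A /\ B) = 1/2 * P(A). *)
Definition randomly_stopped d (T : measurableType d) (R : realType)
  (P : probability T R) (K : T -> seq bool) : Prop :=
  discrete_rv K /\
  forall (n : nat) (k : seq bool), (1 <= n)%N -> size k = n ->
    let A := [set w | (n <= size (K w))%N /\ take n.-1 (K w) = take n.-1 k] in
    (0 < P A)%E ->
    P (A `&` [set w | nth false (K w) n.-1 = nth false k n.-1]) =
    ((2%:R^-1)%:E * P A)%E.

From HB Require Import structures.
From mathcomp Require Import all_boot all_order all_algebra.
From mathcomp Require Import all_classical all_reals.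
From mathcomp Require Import ereal sequences measure probability.
From mathcomp Require Import zify.
Set Implicit Arguments. Unset Strict Implicit. Unset Printing Implicit Defensive.
Import Order.TTheory GRing.Theory Num.Theory.
Local Open Scope classical_set_scope.
Local Open Scope ring_scope.

(* Split [J ++ K] according to [m = min(|J|, n)].  On the piece [m = n] the
   first [n] bits of [J ++ K] are those of [J], so the conditional probability
   of the [n]-th bit is 1/2 because [J] is randomly stopped.  On a piece
   [m < n], [J] is the fixed word [k^m] and the rest of the event concerns [K]
   alone, shifted by [m]; independence factors out [P(J = k^m)] and [K] being
   randomly stopped gives the factor 1/2.  Countable additivity reassembles the
   pieces.  Conditioning events of probability zero are harmless, since both
   sides of the defining identity then vanish. *)

Section pickle_slices.
Variable A : countType.

(* Cutting a set of a countable type along the fibres of [pickle] turns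
   sums over its elements into series indexed by [nat]. *)
Definition pickle_slice (S : set A) (i : nat) : set A :=
  [set a | S a /\ pickle a = i].

Lemma bigcup_pickle_slice (S : set A) : \bigcup_i pickle_slice S i = S.
Proof.
apply/seteqP; split=> [a [i _ []//]|a Sa]; by exists (pickle a).
Qed.

Lemma pickle_slice_set0_or_set1 (S : set A) i :
  pickle_slice S i = set0 \/ exists a, pickle_slice S i = [set a].
Proof.
have [[a [Sa ai]]|none] := pselect (exists a, pickle_slice S i a); last first.
  by left; apply/seteqP; split=> // a Sia; apply: none; exists a.
right; exists a; apply/seteqP; split=> [b [_ bi]|b ->//].
by apply: (pcan_inj (@pickleK A)); rewrite bi ai.
Qed.

End pickle_slices.

Lemma measurable_preimage_countable d (T : measurableType d) (A : countType)
    (X : T -> A) (S : set A) :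
  (forall a, measurable (X @^-1` [set a])) -> measurable (X @^-1` S).
Proof.
move=> mX; rewrite -(bigcup_pickle_slice S) preimage_bigcup.
apply: bigcupT_measurable => i.
by case: (pickle_slice_set0_or_set1 S i) => [->|[a ->]]; rewrite ?preimage_set0.
Qed.

Lemma measure_setI_bigcup_scale d (T : measurableType d) (R : realType)
    (mu : {measure set T -> \bar R}) (F : nat -> set T) (B : set T) (c : R) :
  (forall i, measurable (F i)) -> trivIset setT F -> measurable B ->
  (forall i, mu (F i `&` B) = (c%:E * mu (F i))%E) ->
  mu (\bigcup_i F i `&` B) = (c%:E * mu (\bigcup_i F i))%E.
Proof.
move=> mF tF mB FB.
rewrite setI_bigcupl !measure_bigcup //; last 2 first.
- by move=> i _; exact: measurableI.
- exact: trivIset_setIr.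
rewrite -nneseriesZl; last by move=> i _; exact: measure_ge0.
by apply: eq_eseriesr => i _; exact: FB.
Qed.

Lemma measurable_preimage_pair d (T : measurableType d) (J K : T -> seq bool)
    (S : set (seq bool * seq bool)) :
  discrete_rv J -> discrete_rv K -> measurable ((fun w => (J w, K w)) @^-1` S).
Proof.
move=> mJ mK; apply: measurable_preimage_countable => -[s t].
have -> : (fun w => (J w, K w)) @^-1` [set (s, t)] =
          J @^-1` [set s] `&` K @^-1` [set t].
  by apply/seteqP; split=> w /= [-> ->].
exact: measurableI.
Qed.

Definition prefix_match (n : nat) (k s : seq bool) : Prop :=
  (n <= size s)%N /\ take n.-1 s = take n.-1 k.

Definition bit_match (n : nat) (k s : seq bool) : Prop :=
  nth false s n.-1 = nth false k n.-1.

Lemma prefix_match_catl n k j t :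
  (n <= size j)%N -> prefix_match n k (j ++ t) <-> prefix_match n k j.
Proof.
move=> nj; rewrite /prefix_match size_cat takel_cat; last by lia.
by split=> -[_ ->]; split=> //; lia.
Qed.

Lemma bit_match_catl n k j t :
  (n.-1 < size j)%N -> bit_match n k (j ++ t) <-> bit_match n k j.
Proof. by move=> nj; rewrite /bit_match nth_cat nj. Qed.

Lemma prefix_match_catr n k j t : size k = n -> (size j < n)%N ->
  prefix_match n k (j ++ t) <->
  j = take (size j) k /\ prefix_match (n - size j) (drop (size j) k) t.
Proof.
move=> sk jn; rewrite /prefix_match size_cat take_cat ifN; last by lia.
rewrite -{1}(cat_take_drop (size j) k) take_cat size_take sk jn ifN;
  last by lia.
have -> : (n.-1 - size j = (n - size j).-1)%N by lia.
split=> [[len /eqP]|[ej [len ->]]]; last by split; [lia | rewrite -ej].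
rewrite eqseq_cat ?size_take ?sk ?jn // => /andP[/eqP<- /eqP->].
by split=> //; split=> //; lia.
Qed.

Lemma bit_match_catr n k j t : (size j < n)%N ->
  bit_match n k (j ++ t) <-> bit_match (n - size j) (drop (size j) k) t.
Proof.
move=> jn; rewrite /bit_match nth_cat nth_drop ifN; last by lia.
have -> : (size j + (n - size j).-1 = n.-1)%N by lia.
by have -> : (n.-1 - size j = (n - size j).-1)%N by lia.
Qed.

Section cat_prefix_pieces.
Context d (T : measurableType d).
Variables (J K : T -> seq bool) (n : nat) (k : seq bool).

Definition cat_prefix_piece (m : nat) : set T :=
  if (m < n)%N then
    J @^-1` [set take m k] `&` K @^-1` prefix_match (n - m) (drop m k)
  else if m == n then J @^-1` prefix_match n k else set0.

Hypothesis sk : size k = n.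

Lemma cat_prefix_piece_index m w :
  cat_prefix_piece m w -> m = minn (size (J w)) n.
Proof.
rewrite /cat_prefix_piece; case: ltnP => [mn [/= -> _]|nm].
  by rewrite size_take sk mn; lia.
by case: eqP => // -> [/= nJ _]; lia.
Qed.

Lemma trivIset_cat_prefix_piece : trivIset setT cat_prefix_piece.
Proof.
by move=> m m' _ _ [w [/cat_prefix_piece_index-> /cat_prefix_piece_index->]].
Qed.

Lemma bigcup_cat_prefix_piece :
  \bigcup_m cat_prefix_piece m = (fun w => J w ++ K w) @^-1` prefix_match n k.
Proof.
apply/seteqP; split=> [w [m _]|w /= Lw].
  rewrite /cat_prefix_piece; case: ltnP => [mn [/= Jw Kw]|nm].
    have sJ : size (J w) = m by rewrite Jw size_take sk mn.
    by apply/(prefix_match_catr _ sk); rewrite sJ.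
  by case: eqP => // _ Jw; apply/(prefix_match_catl _ _ Jw.1).
exists (minn (size (J w)) n) => //; rewrite /cat_prefix_piece.
case: (leqP n (size (J w))) => [nJ|Jn].
  by rewrite ltnn eqxx; exact: (prefix_match_catl _ _ nJ).1 Lw.
by rewrite Jn; exact: (prefix_match_catr _ sk Jn).1 Lw.
Qed.

Hypotheses (mJ : discrete_rv J) (mK : discrete_rv K).

Lemma measurable_cat_prefix_piece m : measurable (cat_prefix_piece m).
Proof.
rewrite /cat_prefix_piece; case: ifP => _.
  by apply: measurableI; exact: measurable_preimage_countable.
by case: ifP => _; first exact: measurable_preimage_countable.
Qed.

End cat_prefix_pieces.

Section randomly_stopped_cat.
Context d (T : measurableType d) (R : realType) (P : probability T R).

Lemma independent_rv_preimage (J K : T -> seq bool) (j : seq bool)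
    (S : set (seq bool)) :
  discrete_rv J -> discrete_rv K -> independent_rv P J K ->
  P (J @^-1` [set j] `&` K @^-1` S) =
  (P (J @^-1` [set j]) * P (K @^-1` S))%E.
Proof.
move=> mJ mK iJK.
have finJ : P (J @^-1` [set j]) \is a fin_num by apply: fin_num_measure.
rewrite setIC -(bigcup_pickle_slice S) preimage_bigcup -[in RHS](fineK finJ).
apply: measure_setI_bigcup_scale => //.
- by move=> i; exact: measurable_preimage_countable.
- by move=> i i' _ _ [w [[_ <-] [_ <-]]].
move=> i; rewrite fineK //.
case: (pickle_slice_set0_or_set1 S i) => [->|[a ->]].
  by rewrite preimage_set0 set0I measure0 mule0.
by rewrite setIC; exact: iJK.
Qed.

Lemma randomly_stoppedP (K : T -> seq bool) :
  randomly_stopped P K <->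
  discrete_rv K /\
  forall n k, (1 <= n)%N -> size k = n ->
    P (K @^-1` prefix_match n k `&` K @^-1` bit_match n k) =
    ((2%:R^-1)%:E * P (K @^-1` prefix_match n k))%E.
Proof.
split=> -[mK half]; split=> // n k n1 sk; last by move=> /= _; exact: half.
have mA : measurable (K @^-1` prefix_match n k).
  exact: measurable_preimage_countable.
have [pos|] := boolP (0 < P (K @^-1` prefix_match n k))%E; first exact: half.
rewrite lt0e measure_ge0 andbT negbK => /eqP A0.
rewrite A0 mule0; apply: subset_measure0 A0 => //.
by apply: measurableI => //; exact: measurable_preimage_countable.
Qed.

Lemma cat_prefix_piece_bit (J K : T -> seq bool) n k m :
  size k = n -> (0 < n)%N ->
  randomly_stopped P J -> randomly_stopped P K -> independent_rv P J K ->
  P (cat_prefix_piece J K n k m `&` (fun w => J w ++ K w) @^-1` bit_match n k) =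
  ((2%:R^-1)%:E * P (cat_prefix_piece J K n k m))%E.
Proof.
move=> sk n_gt0 rsJ rsK iJK.
have [mJ halfJ] := (randomly_stoppedP J).1 rsJ.
have [mK halfK] := (randomly_stoppedP K).1 rsK.
rewrite /cat_prefix_piece; case: ltnP => [mn|nm].
  have bitE w : J w = take m k ->
      bit_match n k (J w ++ K w) <-> bit_match (n - m) (drop m k) (K w).
    move=> Jw; have sJ : size (J w) = m by rewrite Jw size_take sk mn.
    by rewrite -sJ; apply: bit_match_catr; rewrite sJ.
  have -> : J @^-1` [set take m k] `&` K @^-1` prefix_match (n - m) (drop m k)
              `&` (fun w => J w ++ K w) @^-1` bit_match n k =
            J @^-1` [set take m k] `&` K @^-1` (prefix_match (n - m) (drop m k)
              `&` bit_match (n - m) (drop m k)).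
    by apply/seteqP; split=> [w /= [[Jw Kw] /(bitE _ Jw) Bw]|
                              w /= [Jw [Kw /(bitE _ Jw) Bw]]].
  rewrite !independent_rv_preimage // preimage_setI.
  by rewrite halfK ?size_drop ?sk ?subn_gt0 // muleCA.
case: eqP => _; last by rewrite set0I measure0 mule0.
have -> : J @^-1` prefix_match n k
            `&` (fun w => J w ++ K w) @^-1` bit_match n k =
          J @^-1` prefix_match n k `&` J @^-1` bit_match n k.
  apply/seteqP; split=> w /= [Jw];
    by rewrite bit_match_catl ?prednK //; case: Jw.
exact: halfJ.
Qed.

End randomly_stopped_cat.

Theorem proposition2 (R : realType) (d : measure_display) (T : measurableType d)
  (P : probability T R) (J K : T -> seq bool) :
  randomly_stopped P J -> randomly_stopped P K -> independent_rv P J K ->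
  randomly_stopped P (fun w => J w ++ K w).
Proof.
move=> rsJ rsK iJK.
have [[mJ _] [mK _]] := (rsJ, rsK).
have mL : discrete_rv (fun w => J w ++ K w).
  by move=> s; exact: (measurable_preimage_pair (fun p => p.1 ++ p.2 = s)).
apply/randomly_stoppedP; split=> // n k n_gt0 sk.
rewrite -(bigcup_cat_prefix_piece J K sk).
apply: measure_setI_bigcup_scale.
- exact: measurable_cat_prefix_piece mJ mK.
- exact: trivIset_cat_prefix_piece.
- exact: measurable_preimage_countable.
- by move=> m; apply: cat_prefix_piece_bit.
Qed.
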